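(* Let $n\ge 2$, $N=\{1,\dots,n\}$, for each $i\in N$ let $A_i$ be a nonempty finite set, $A=\prod_{i\in N}A_i$, $u_i:A\to\mathbb{R}$, $u(a)=(u_i(a))_{i\in N}$, and fix $\lambda\in\mathbb{R}^n\setminus\{\mathbf 0\}$. Then: (1) For $\Delta=\delta^T$ sufficiently close to $1$, the solution of the problem $\max_{a^{[n]}\in A^n}W_\lambda(a^{[n]},\Delta)$ is to play, in each overlap $k=1,\dots,n$, some $a^k\in\arg\max_{a'\in A}\lambda\cdot u(a')$. Moreover, $F(\delta,T)\to V$ as $\delta^T\nearrow 1$. (2) For $\Delta=\delta^T$ sufficiently close to $0$, the solution of the problem $\max_{a^{[n]}\in A^n}W_\lambda(a^{[n]},\Delta)$ is to play, in each overlap $k=1,\dots,n$, some $a^k\in\arg\max_{a'\in A}\lambda_{k}u_{k}(a')$ (player $k$ being the youngest player in overlap $k$). Moreover, $F(\delta,T)\to\prod_{i\in N}\left[\min_{a\in A}u_i(a),\ \max_{a\in A}u_i(a)\right]$ as $\delta^T\searrow 0$.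
   Context: Here $\delta\in(0,1]$ and $T\in\mathbb{N}$. For $a^{[n]}=(a^1,\dots,a^n)\in A^n$ extend indices by $a^s=a^{s-n}$ for $s\ge n+1$, and for $\Delta\in(0,1]$ define $$v_i^\Delta(a^{[n]})=\frac{\sum_{k=1}^n\Delta^{k-1}u_i(a^{i+k-1})}{\sum_{k=1}^n\Delta^{k-1}},\qquad W_\lambda(a^{[n]},\Delta)=\sum_{i=1}^n\lambda_i v_i^\Delta(a^{[n]}).$$ ''The solution is to play ...'' means that every maximizer $(a^1,\dots,a^n)$ has the stated form. $V=\operatorname{co}\{u(a):a\in A\}$ ($\operatorname{co}$ = convex hull). For $a^{[nT]}=(a^1,\dots,a^{nT})\in A^{nT}$, extend indices by $a^s=a^{s-nT}$ for $s\ge nT+1$, set $U_i(a^{[nT]})=\frac{1}{\sum_{k=1}^{nT}\delta^{k-1}}\sum_{k=1}^{nT}\delta^{k-1}u_i(a^{(i-1)T+k})$, $U=(U_i)_{i\in N}$, and $F(\delta,T)=\operatorname{co}\left(\bigcup_{a^{[nT]}\in A^{nT}}\{U(a^{[nT]})\}\right)$. Convergence of sets is with respect to the Hausdorff distance. *)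

From HB Require Import structures.
From mathcomp Require Import all_boot all_order all_algebra.
From mathcomp Require Import reals.
Set Implicit Arguments. Unset Strict Implicit. Unset Printing Implicit Defensive.
Import Order.TTheory GRing.Theory Num.Theory.
Local Open Scope ring_scope.

(* Cyclic index: s mod m as an element of 'I_m (i : 'I_m only witnesses m > 0).
   Everything below is 0-based: player i in 0..n-1, overlap k in 0..n-1,
   so the paper's a^{i+k-1} (1-based, cyclic) becomes a ((i+k) mod n). *)
Lemma cycidx_lt m (i : 'I_m) (s : nat) : (s %% m < m)%N.
Proof. by rewrite ltn_pmod // (leq_ltn_trans (leq0n i) (ltn_ord i)). Qed.

Definition cycidx m (i : 'I_m) (s : nat) : 'I_m := Ordinal (cycidx_lt i s).

Section Defs.
Variable R : realType.
Variable n : nat.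
Variable A : finType.           (* the set of action profiles *)
Variable u : 'I_n -> A -> R.

Definition vD (D : R) (a : {ffun 'I_n -> A}) (i : 'I_n) : R :=
  (\sum_(k < n) D ^+ k * u i (a (cycidx i (i + k)))) / (\sum_(k < n) D ^+ k).

Definition W (lam : 'I_n -> R) (a : {ffun 'I_n -> A}) (D : R) : R :=
  \sum_(i < n) lam i * vD D a i.

Definition is_maximizer (lam : 'I_n -> R) (D : R) (a : {ffun 'I_n -> A}) : Prop :=
  forall b : {ffun 'I_n -> A}, W lam b D <= W lam a D.

Definition dotu (lam : 'I_n -> R) (a : A) : R := \sum_(i < n) lam i * u i a.

(* U_i(a^[nT]) ; the paper's a^{(i-1)T+k} (1-based) is b((i*T + k) mod nT) 0-based *)
Definition Upay (delta : R) (T : nat) (b : {ffun 'I_(n * T) -> A}) : 'I_n -> R :=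
  fun i => (\sum_(k < n * T) delta ^+ k * u i (b (cycidx k (i * T + k))))
           / (\sum_(k < n * T) delta ^+ k).

Definition hull (I : finType) (p : I -> 'I_n -> R) : ('I_n -> R) -> Prop :=
  fun x => exists w : I -> R,
    [/\ forall j, 0 <= w j, \sum_j w j = 1 & forall i, x i = \sum_j w j * p j i].

Definition Vset : ('I_n -> R) -> Prop := hull (fun a i => u i a).

Definition Fset (delta : R) (T : nat) : ('I_n -> R) -> Prop :=
  @hull {ffun 'I_(n * T) -> A} (@Upay delta T).

(* prod_i [min_a u_i(a), max_a u_i(a)]  (min_a u_i a <= x  iff  exists a, u_i a <= x) *)
Definition box : ('I_n -> R) -> Prop :=
  fun x => forall i, (exists a, u i a <= x i) /\ (exists a, x i <= u i a).

End Defs.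

(* Hausdorff distance (w.r.t. the sup norm on R^n) at most e:
   each set is contained in the closed e-neighbourhood of the other. *)
Definition hclose (R : realType) (n : nat) (X Y : ('I_n -> R) -> Prop) (e : R) : Prop :=
  (forall x, X x -> exists y, Y y /\ forall i, `|x i - y i| <= e) /\
  (forall y, Y y -> exists x, X x /\ forall i, `|x i - y i| <= e).

From HB Require Import structures.
From mathcomp Require Import all_boot all_order all_algebra.
From mathcomp Require Import reals.
From mathcomp Require Import ring lra.
Import Order.TTheory GRing.Theory Num.Theory.
Local Open Scope ring_scope.
Set Implicit Arguments. Unset Strict Implicit. Unset Printing Implicit Defensive.

(* [v_i^Delta] and [U_i] are discounted averages of stage payoffs along one
   cycle in which consecutive blocks (overlaps, resp. runs of [T] stages) are
   discounted by [Delta = delta ^ T].  As [Delta] tends to 1 the weights become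
   uniform: [W_lambda(., Delta)] is uniformly close to
   [a |-> sum_k lambda . u(a^k) / n], and [U] to the mean of [u] over the
   cycle, a point of [V] (conversely [u(a)] is [U] of the constant play [a]).
   As [Delta] tends to 0 the weight concentrates on the first block:
   [W_lambda(., Delta)] is close to [a |-> sum_k lambda_k u_k(a^k)], and [U_i]
   to [u_i] of the profile played in player [i]'s first block.  Both limits of
   [W_lambda] are separable in the overlaps, and on a finite set the argmax of
   a separable objective survives small perturbations.  Playing a vertex
   profile in each block and mixing with product weights reaches every point
   of the box. *)

Lemma cycidx_irrelevant m (i j : 'I_m) s : cycidx i s = cycidx j s.
Proof. exact: val_inj. Qed.

Lemma sum_cycidx (V : nmodType) m (w : 'I_m) s (F : 'I_m -> V) :
  \sum_(k < m) F (cycidx w (s + k)) = \sum_(j < m) F j.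
Proof.
have inj : injective (fun k : 'I_m => cycidx w (s + k)).
  move=> k1 k2 /(congr1 val) /= /eqP.
  by rewrite eqn_modDl !modn_small // => /eqP /val_inj.
by rewrite [RHS](reindex_inj inj).
Qed.

Section Averages.
Variable R : realType.

Lemma convex_comb_bounds (I : finType) (w P : I -> R) (lo hi : R) :
  (forall j, 0 <= w j) -> \sum_j w j = 1 -> (forall j, lo <= P j <= hi) ->
  lo <= \sum_j w j * P j <= hi.
Proof.
move=> w0 w1 hP; have cst c : c = \sum_j w j * c by rewrite -mulr_suml w1 mul1r.
by apply/andP; split; [rewrite {1}[lo]cst | rewrite [hi]cst];
  apply: ler_sum => j _; apply: ler_wpM2l => //; case/andP: (hP j).
Qed.

Lemma convex_comb_close (I : finType) (w P Q : I -> R) (e : R) :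
  (forall j, 0 <= w j) -> \sum_j w j = 1 -> (forall j, `|P j - Q j| <= e) ->
  `|\sum_j w j * P j - \sum_j w j * Q j| <= e.
Proof.
move=> w0 w1 hPQ; rewrite -sumrB; apply: (le_trans (ler_norm_sum _ _ _)).
rewrite -[e]mul1r -w1 mulr_suml; apply: ler_sum => j _.
by rewrite -mulrBr normrM ger0_norm // ler_wpM2l.
Qed.

Lemma segment_interpolate (lo y hi : R) : lo <= y <= hi ->
  exists t, 0 <= t <= 1 /\ y = t * hi + (1 - t) * lo.
Proof.
case/andP=> ly yh; have [lh|] := ltP lo hi.
  have d0 : 0 < hi - lo by rewrite subr_gt0.
  exists ((y - lo) / (hi - lo)); split; last by field; rewrite gt_eqF.
  apply/andP; split; first by apply: divr_ge0; lra.
  by rewrite ler_pdivrMr // mul1r; lra.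
by move=> hl; exists 0; rewrite lexx ler01; split => //; lra.
Qed.

Lemma bernoulli_le (x : R) m : 0 <= x -> x <= 1 -> 1 - x ^+ m <= m%:R * (1 - x).
Proof.
move=> x0 x1; elim: m => [|m IH]; first by rewrite expr0 subrr mul0r.
have := exprn_ge0 m x0; have := exprn_ile1 m x0 x1.
by rewrite exprS mulrSr mulrDl mul1r; nra.
Qed.

Lemma expr_in_unit (x : R) m : 0 < x <= 1 -> 0 < x ^+ m <= 1.
Proof. by case/andP=> x0 x1; rewrite exprn_gt0 //= exprn_ile1 // ltW. Qed.

Definition wavg (D : R) m (c : nat -> R) : R :=
  (\sum_(k < m) D ^+ k * c k) / \sum_(k < m) D ^+ k.

Lemma sum_expr_gt0 (D : R) m : 0 < D -> (0 < m)%N -> 0 < \sum_(k < m) D ^+ k.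
Proof.
move=> D0 m0; rewrite (bigD1 (Ordinal m0)) //= expr0 ltr_pwDl //.
by apply: sumr_ge0 => k _; rewrite exprn_ge0 // ltW.
Qed.

Lemma wavgE (D : R) m c :
  wavg D m c = \sum_(k < m) D ^+ k / (\sum_(j < m) D ^+ j) * c k.
Proof. by rewrite /wavg mulr_suml; apply: eq_bigr => k _; rewrite mulrAC. Qed.

Lemma sum_wavg_weights (D : R) m : 0 < D -> (0 < m)%N ->
  \sum_(k < m) D ^+ k / (\sum_(j < m) D ^+ j) = 1.
Proof. by move=> D0 m0; rewrite -mulr_suml mulfV // gt_eqF // sum_expr_gt0. Qed.

Lemma wavg_bounds (D lo hi : R) m c : 0 < D -> (0 < m)%N ->
  (forall k, (k < m)%N -> lo <= c k <= hi) -> lo <= wavg D m c <= hi.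
Proof.
move=> D0 m0 hc; rewrite wavgE; apply: convex_comb_bounds.
- by move=> k; rewrite divr_ge0 ?exprn_ge0 ?ltW ?sum_expr_gt0.
- exact: sum_wavg_weights.
- by move=> k; apply: hc.
Qed.

Lemma wavg_const (D e : R) m c : 0 < D -> (0 < m)%N ->
  (forall k, (k < m)%N -> c k = e) -> wavg D m c = e.
Proof.
move=> D0 m0 hc; apply/esym/le_anti.
by apply: wavg_bounds => // k km; rewrite hc ?lexx.
Qed.

Lemma wavg_mean (D M : R) m c : 0 < D <= 1 -> (0 < m)%N ->
  (forall k, (k < m)%N -> `|c k| <= M) ->
  `|wavg D m c - (\sum_(k < m) c k) / m%:R| <= M * ((D ^+ m)^-1 - D ^+ m).
Proof.
move=> /andP[D0 D1] m0 hc; set S := \sum_(k < m) D ^+ k; set q := D ^+ m.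
have q0 : 0 < q := exprn_gt0 m D0.
have q1 : q <= 1 := exprn_ile1 m (ltW D0) D1.
have mR : 0 < m%:R :> R by rewrite ltr0n.
have Dk (k : 'I_m) : q <= D ^+ k <= 1.
  by rewrite (ler_wiXn2l (ltW D0)) ?(exprn_ile1 _ (ltW D0)) // ltnW.
have [Slo Shi] : m%:R * q <= S /\ S <= m%:R.
  have sum_cst (a : R) : \sum_(k < m) a = m%:R * a by rewrite sumr_const card_ord mulr_natl.
  rewrite -sum_cst -[m%:R]mulr1 -sum_cst.
  by split; apply: ler_sum => k _; case/andP: (Dk k).
have S0 : 0 < S by apply: lt_le_trans Slo; rewrite mulr_gt0.
have qm0 : 0 < q * m%:R by rewrite mulr_gt0.
(* every weight, discounted or uniform, lies in [q/m, 1/(qm)] *)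
have weight_dist (w : R) : q / m%:R <= w <= (q * m%:R)^-1 ->
    `|w - m%:R^-1| <= (q * m%:R)^-1 - q / m%:R.
  have lo : q / m%:R <= m%:R^-1 by rewrite ler_pdivrMr // mulVf ?gt_eqF.
  have hi : m%:R^-1 <= (q * m%:R)^-1.
    by rewrite lef_pV2 ?posrE // ler_piMl // ltW.
  by case/andP=> ? ?; rewrite ler_norml; apply/andP; split; lra.
have -> : wavg D m c - (\sum_(k < m) c k) / m%:R =
          \sum_(k < m) (D ^+ k / S - m%:R^-1) * c k.
  by rewrite /wavg -/S !mulr_suml -sumrB; apply: eq_bigr => k _; ring.
apply: (le_trans (ler_norm_sum _ _ _)).
apply: (@le_trans _ _ (\sum_(k < m) ((q * m%:R)^-1 - q / m%:R) * M)).
  apply: ler_sum => k _; rewrite normrM; apply: ler_pM => //; last exact: hc.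
  apply: weight_dist; case/andP: (Dk k) => qD Dk1.
  have ge0 x : 0 < x -> 0 <= x^-1 by move=> x0; rewrite invr_ge0 ltW.
  apply/andP; split; first by apply: ler_pM; rewrite ?ge0 ?(ltW q0) // lef_pV2.
  rewrite -[(q * m%:R)^-1]mul1r; apply: ler_pM; rewrite ?exprn_ge0 ?ge0 ?(ltW D0) //.
  by rewrite lef_pV2 ?posrE // mulrC.
rewrite sumr_const card_ord -mulr_natr invfM.
by rewrite [X in X <= _](_ : _ = M * (q^-1 - q)) //; field; rewrite !gt_eqF.
Qed.

Lemma sum_expr_tail (D : R) n T : 0 <= D -> D <= 1 ->
  \sum_(T <= k < n.+1 * T) D ^+ k <= n%:R * D ^+ T * \sum_(0 <= k < T) D ^+ k.
Proof.
move=> D0 D1; elim: n => [|n IH]; first by rewrite mul1n big_geq // !mul0r.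
rewrite (@big_cat_nat _ _ _ (n.+1 * T)) /=; last 2 first.
- by rewrite mulSn leq_addr.
- by rewrite leq_mul2r leqnSn orbT.
rewrite mulrSr !mulrDl mul1r lerD // -{1}(add0n (n.+1 * T)%N) big_addn mulSn addnK.
rewrite mulr_sumr; apply: ler_sum => k _.
by rewrite exprD mulrC ler_wpM2r ?exprn_ge0 // ler_wiXn2l // mulSn leq_addr.
Qed.

(* The bound depends on [T] only through [D ^+ T]: each later block weighs
   at most [D ^+ T] times the first one. *)
Lemma wavg_first_block (D M e : R) n T c : 0 < D <= 1 -> (0 < n)%N -> (0 < T)%N ->
  (forall k, (k < T)%N -> c k = e) -> (forall k, (k < n * T)%N -> `|c k - e| <= M) ->
  `|wavg D (n * T) c - e| <= M * n%:R * D ^+ T.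
Proof.
move=> /andP[D0 D1] + T0 hce; case: n => // n _ hc.
have m0 : (0 < n.+1 * T)%N by rewrite muln_gt0.
have S0 := sum_expr_gt0 D0 m0.
have head_tail (F : nat -> R) : \sum_(k < n.+1 * T) F k =
    \sum_(0 <= k < T) F k + \sum_(T <= k < n.+1 * T) F k.
  by rewrite -(big_mkord xpredT) -big_cat_nat ?leq_pmull.
set S1 := \sum_(0 <= k < T) D ^+ k; set S2 := \sum_(T <= k < n.+1 * T) D ^+ k.
have S1_gt0 : 0 < S1 by rewrite /S1 big_mkord sum_expr_gt0.
have -> : wavg D (n.+1 * T) c - e =
    (\sum_(T <= k < n.+1 * T) D ^+ k * (c k - e)) / (S1 + S2).
  rewrite /wavg (head_tail (fun k => D ^+ k * c k)) head_tail -/S1 -/S2.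
  have -> : \sum_(0 <= k < T) D ^+ k * c k = S1 * e.
    rewrite /S1 mulr_suml big_nat_cond [RHS]big_nat_cond.
    by apply: eq_bigr => k /andP[/andP[_ kT] _]; rewrite hce.
  have -> : \sum_(T <= k < n.+1 * T) D ^+ k * (c k - e) =
      \sum_(T <= k < n.+1 * T) D ^+ k * c k - S2 * e.
    by rewrite mulr_suml -sumrB; apply: eq_bigr => k _; rewrite mulrBr.
  field; rewrite -head_tail gt_eqF //.
have S2_le : S2 <= n.+1%:R * D ^+ T * S1.
  apply: (le_trans (sum_expr_tail n T (ltW D0) D1)).
  apply: ler_wpM2r; first exact: ltW.
  by apply: ler_wpM2r; rewrite ?(exprn_ge0 _ (ltW D0)) // ler_nat.
have M0 : 0 <= M by apply: le_trans (hc 0%N m0).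
have S2_ge0 : 0 <= S2 by apply: sumr_ge0 => k _; rewrite exprn_ge0 ?ltW.
have num_le : `|\sum_(T <= k < n.+1 * T) D ^+ k * (c k - e)| <= M * S2.
  rewrite /S2 mulr_sumr; apply: (le_trans (ler_norm_sum _ _ _)).
  rewrite big_nat_cond [X in _ <= X]big_nat_cond.
  apply: ler_sum => k /andP[/andP[_ km] _].
  by rewrite normrM ger0_norm ?exprn_ge0 ?(ltW D0) // mulrC ler_wpM2r ?exprn_ge0 ?(ltW D0) ?hc.
have S12 : 0 < S1 + S2 by rewrite ltr_wpDr.
rewrite normrM normfV (ger0_norm (ltW S12)) ler_pdivrMr //.
apply: (le_trans num_le); apply: (le_trans (ler_wpM2l M0 S2_le)).
rewrite !mulrA; apply: ler_wpM2l; last by rewrite lerDl.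
by rewrite !mulr_ge0 ?exprn_ge0 ?(ltW D0).
Qed.

Lemma linear_small (C e : R) : 0 <= C -> 0 < e ->
  exists2 eta, 0 < eta & forall x, x < eta -> C * x <= e.
Proof.
move=> C0 e0; have C1 : 0 < C + 1 by lra.
exists (e / (C + 1)) => [|x xe]; first by rewrite divr_gt0.
apply: (le_trans (ler_wpM2l C0 (ltW xe))).
rewrite mulrA ler_pdivrMr //; nra.
Qed.

Lemma inv_expr_sub_le (x : R) m : 0 < x <= 1 -> 2 * (m%:R * (1 - x)) <= 1 ->
  (x ^+ m)^-1 - x ^+ m <= 4 * m%:R * (1 - x).
Proof.
move=> /andP[x0 x1] hm; have := bernoulli_le m (ltW x0) x1.
have := exprn_gt0 m x0; have := exprn_ile1 m (ltW x0) x1.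
set q := x ^+ m => q1 q0 hq.
have -> : q^-1 - q = (1 - q) * (1 + q) / q by field; rewrite gt_eqF.
rewrite ler_pdivrMr //; nra.
Qed.

Lemma near1_inv_expr_sub (C e : R) m : 0 <= C -> 0 < e ->
  exists2 eta, 0 < eta & forall x, 0 < x <= 1 -> 1 - x < eta ->
    C * ((x ^+ m)^-1 - x ^+ m) <= e.
Proof.
move=> C0 e0; have C4 : 0 <= C * (4 * m%:R) by rewrite !mulr_ge0.
have [eta1 eta1_gt0 h1] := linear_small C4 e0.
have m1 : 0 < 2 * m.+1%:R :> R by rewrite mulr_gt0 ?ltr0n.
exists (Num.min eta1 (2 * m.+1%:R)^-1) => [|x hx hxe].
  by rewrite lt_min eta1_gt0 invr_gt0.
rewrite lt_min in hxe; case/andP: hxe => hx1 hx2.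
have hm : 2 * (m%:R * (1 - x)) <= 1.
  have : 0 <= 1 - x by case/andP: hx => _; rewrite subr_ge0.
  move: hx2; rewrite -[_^-1]mul1r ltr_pdivlMr // mulrSr; nra.
apply: le_trans (h1 _ hx1); rewrite -mulrA ler_wpM2l //.
exact: inv_expr_sub_le.
Qed.

End Averages.

Section ConvexHull.
Variables (R : realType) (n : nat).

Lemma hull_push (I J : finType) (p : I -> 'I_n -> R) (f : J -> I) (w : J -> R)
    (x : 'I_n -> R) :
  (forall j, 0 <= w j) -> \sum_j w j = 1 ->
  (forall i, x i = \sum_j w j * p (f j) i) -> hull p x.
Proof.
move=> w0 w1 hx; exists (fun b => \sum_(j | f j == b) w j); split.
- by move=> b; apply: sumr_ge0.
- by rewrite -w1 (partition_big f xpredT).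
- move=> i; rewrite hx (partition_big f xpredT) //=; apply: eq_bigr => b _.
  by rewrite mulr_suml; apply: eq_bigr => j /eqP <-.
Qed.

Lemma hull_point (I : finType) (p : I -> 'I_n -> R) j : hull p (p j).
Proof.
by apply: (@hull_push _ 'I_1 _ (fun _ => j) (fun _ => 1)) => [//||i];
  rewrite big_ord1 ?mul1r.
Qed.

Lemma hull_convex (I J : finType) (p : I -> 'I_n -> R) (y : J -> 'I_n -> R)
    (w : J -> R) :
  (forall j, hull p (y j)) -> (forall j, 0 <= w j) -> \sum_j w j = 1 ->
  hull p (fun i => \sum_j w j * y j i).
Proof.
move=> /fin_all_exists[v hv] w0 w1; exists (fun a => \sum_j w j * v j a); split.
- by move=> a; apply: sumr_ge0 => j _; rewrite mulr_ge0 //; case: (hv j).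
- rewrite exchange_big -[RHS]w1; apply: eq_bigr => j _.
  by rewrite -mulr_sumr; case: (hv j) => _ -> _; rewrite mulr1.
- move=> i; transitivity (\sum_j \sum_a w j * (v j a * p a i)).
    by apply: eq_bigr => j _; case: (hv j) => _ _ ->; rewrite mulr_sumr.
  rewrite exchange_big; apply: eq_bigr => a _; rewrite mulr_suml.
  by apply: eq_bigr => j _; rewrite mulrA.
Qed.

Lemma hull_approx (I J : finType) (p : I -> 'I_n -> R) (q : J -> 'I_n -> R)
    (e : R) (x : 'I_n -> R) :
  hull p x -> (forall j, exists y, hull q y /\ forall i, `|p j i - y i| <= e) ->
  exists y, hull q y /\ forall i, `|x i - y i| <= e.
Proof.
move=> [w [w0 w1 hx]] /fin_all_exists[y hy].
exists (fun i => \sum_j w j * y j i); split.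
  by apply: hull_convex => // j; case: (hy j).
by move=> i; rewrite hx; apply: convex_comb_close => // j; case: (hy j) => _ ->.
Qed.

End ConvexHull.

Section Argmax.
Variable R : realType.

Lemma exists_gap (I : finType) (h : I -> R) :
  exists2 g, 0 < g & forall i, 0 < h i -> g <= h i.
Proof.
case: (pickP (fun i => 0 < h i)) => [i0 hi0|none]; last first.
  by exists 1 => // i; rewrite none.
case: (@arg_minP _ _ _ i0 (fun i => 0 < h i) h hi0) => i hi hmin.
by exists (h i).
Qed.

(* Finiteness gives a positive gap between optimal and suboptimal choices. *)
Lemma separable_argmax_stable (I A : finType) (f : I -> A -> R) :
  exists2 e, 0 < e & forall F : {ffun I -> A} -> R,
    (forall y, `|F y - \sum_j f j (y j)| <= e) ->
    forall a, (forall b, F b <= F a) -> forall k a', f k a' <= f k (a k).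
Proof.
have [g g0 hg] := exists_gap (fun p : I * A * A => f p.1.1 p.1.2 - f p.1.1 p.2).
exists (g / 3) => [|F hF a amax k a']; first by rewrite divr_gt0.
rewrite leNgt; apply/negP => lt_a.
pose b := [ffun j => if j == k then a' else a j].
have gap : g <= f k a' - f k (a k) by apply: (hg (k, a', a k)); rewrite subr_gt0.
have swap : \sum_j f j (b j) - \sum_j f j (a j) = f k a' - f k (a k).
  rewrite (bigD1 k) //= [X in _ - X](bigD1 k) //= ffunE eqxx.
  rewrite (eq_bigr (fun j => f j (a j))) => [|j /negbTE kj]; last by rewrite ffunE kj.
  by rewrite opprD addrACA subrr addr0.
have := amax b; have := hF a; have := hF b.
rewrite !ler_norml => /andP[? ?] /andP[? ?]; lra.
Qed.

End Argmax.

Section ProductWeights.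
Variables (R : realType) (I : finType) (t : I -> R).

Definition prodw (s : {ffun I -> bool}) : R :=
  \prod_j (if s j then t j else 1 - t j).

Lemma prodw_ge0 s : (forall j, 0 <= t j <= 1) -> 0 <= prodw s.
Proof.
by move=> ht; apply: prodr_ge0 => j _; case: (s j); case/andP: (ht j) => ? ?; lra.
Qed.

Lemma sum_prodw_marginal i0 (x y : R) :
  \sum_s prodw s * (if s i0 then x else y) = t i0 * x + (1 - t i0) * y.
Proof.
pose G j (b : bool) := (if b then t j else 1 - t j) *
                       (if j == i0 then (if b then x else y) else 1).
transitivity (\sum_(s : {ffun I -> bool}) \prod_j G j (s j)).
  apply: eq_bigr => s _; rewrite /prodw (bigD1 i0) //= [RHS](bigD1 i0) //= /G eqxx.
  rewrite mulrAC; congr (_ * _).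
  by apply: eq_bigr => j /negbTE ->; rewrite mulr1.
rewrite -bigA_distr_bigA (bigD1 i0) //= big_bool /G eqxx /= big1 ?mulr1 // => j ji0.
by rewrite big_bool /= (negbTE ji0) !mulr1 addrC subrK.
Qed.

Lemma sum_prodw : \sum_s prodw s = 1.
Proof.
rewrite /prodw -(bigA_distr_bigA (fun j b => if b then t j else 1 - t j)).
by apply: big1 => j _; rewrite big_bool /= addrC subrK.
Qed.

End ProductWeights.

Section Game.
Variables (R : realType) (n : nat) (A : finType).
Variables (u : 'I_n -> A -> R) (lam : 'I_n -> R).
Hypothesis n_gt0 : (0 < n)%N.

Let Mu : R := \sum_i \sum_a `|u i a|.
Let Lam : R := \sum_i `|lam i|.

Lemma Mu_ge0 : 0 <= Mu.
Proof. by do 2!apply: sumr_ge0 => ? _. Qed.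

Lemma Lam_ge0 : 0 <= Lam.
Proof. exact: sumr_ge0. Qed.

Lemma normu_le i a : `|u i a| <= Mu.
Proof.
rewrite /Mu (bigD1 i) //= (bigD1 a) //= -addrA lerDl.
by rewrite addr_ge0 ?sumr_ge0 // => j _; apply: sumr_ge0.
Qed.

Lemma normu_sub_le i a b : `|u i a - u i b| <= 2 * Mu.
Proof. by rewrite mulr2n mulrDl mul1r (le_trans (ler_normB _ _)) // lerD ?normu_le. Qed.

Lemma vD_mean (D : R) a i : 0 < D <= 1 ->
  `|vD u D a i - (\sum_j u i (a j)) / n%:R| <= Mu * ((D ^+ n)^-1 - D ^+ n).
Proof.
move=> hD; have := wavg_mean (c := fun k => u i (a (cycidx i (i + k)))) hD n_gt0.
by rewrite (sum_cycidx i i (fun j => u i (a j))); apply=> k _; apply: normu_le.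
Qed.

Lemma vD_head (D : R) a i : 0 < D <= 1 ->
  `|vD u D a i - u i (a i)| <= 2 * Mu * n%:R * D.
Proof.
move=> hD; have := wavg_first_block (M := 2 * Mu) (e := u i (a i)) (T := 1)
  (c := fun k => u i (a (cycidx i (i + k)))) hD n_gt0 isT.
rewrite muln1 expr1; apply=> [k|k _]; last exact: normu_sub_le.
rewrite ltnS leqn0 => /eqP ->; rewrite addn0 (_ : cycidx i i = i) //.
by apply: val_inj; rewrite /= modn_small.
Qed.

Lemma W_close (D : R) a (L : 'I_n -> R) (E : R) :
  (forall i, `|vD u D a i - L i| <= E) ->
  `|W u lam a D - \sum_i lam i * L i| <= Lam * E.
Proof.
move=> h; rewrite /W -sumrB; apply: (le_trans (ler_norm_sum _ _ _)).
by rewrite /Lam mulr_suml; apply: ler_sum => i _; rewrite -mulrBr normrM ler_wpM2l.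
Qed.

Lemma W_mean (D : R) a : 0 < D <= 1 ->
  `|W u lam a D - \sum_j dotu u lam (a j) / n%:R| <=
    Lam * Mu * ((D ^+ n)^-1 - D ^+ n).
Proof.
move=> hD; have -> : \sum_j dotu u lam (a j) / n%:R =
    \sum_i lam i * ((\sum_j u i (a j)) / n%:R).
  rewrite -mulr_suml exchange_big mulr_suml; apply: eq_bigr => i _.
  by rewrite mulrA mulr_sumr.
by rewrite -mulrA; apply: W_close => i; apply: vD_mean.
Qed.

Lemma W_head (D : R) a : 0 < D <= 1 ->
  `|W u lam a D - \sum_j lam j * u j (a j)| <= Lam * (2 * Mu * n%:R) * D.
Proof. by move=> hD; rewrite -mulrA; apply: W_close => i; apply: vD_head. Qed.

Lemma maximizer_near1 : exists2 eta, 0 < eta & forall D, 0 < D <= 1 -> 1 - D < eta ->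
  forall a, is_maximizer u lam D a -> forall k a', dotu u lam a' <= dotu u lam (a k).
Proof.
have [e e0 stable] := separable_argmax_stable (fun (_ : 'I_n) a => dotu u lam a / n%:R).
have [eta eta0 near] := near1_inv_expr_sub n (mulr_ge0 Lam_ge0 Mu_ge0) e0.
exists eta => // D hD hDeta a amax k a'.
have nR : 0 < n%:R^-1 :> R by rewrite invr_gt0 ltr0n.
rewrite -(ler_pM2r nR); apply: (stable (W u lam ^~ D) _ a amax) => y.
exact: le_trans (W_mean y hD) (near D hD hDeta).
Qed.

Lemma maximizer_near0 : exists2 eta, 0 < eta & forall D, 0 < D <= 1 -> D < eta ->
  forall a, is_maximizer u lam D a -> forall k a', lam k * u k a' <= lam k * u k (a k).
Proof.
have [e e0 stable] := separable_argmax_stable (fun j a => lam j * u j a).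
have C0 : 0 <= Lam * (2 * Mu * n%:R) by rewrite !mulr_ge0 ?Lam_ge0 ?Mu_ge0.
have [eta eta0 near] := linear_small C0 e0.
exists eta => // D hD hDeta a amax; apply: (stable (W u lam ^~ D) _ a amax) => y.
exact: le_trans (W_head y hD) (near D hDeta).
Qed.

Lemma Upay_wavg (delta : R) T (b : {ffun 'I_(n * T) -> A}) i (w : 'I_(n * T)) :
  Upay u delta b i = wavg delta (n * T) (fun k => u i (b (cycidx w (i * T + k)))).
Proof.
by rewrite /Upay; congr (_ / _); apply: eq_bigr => k _; rewrite (cycidx_irrelevant k w).
Qed.

Lemma Upay_mean (delta : R) T (b : {ffun 'I_(n * T) -> A}) i :
  0 < delta <= 1 -> (0 < T)%N ->
  `|Upay u delta b i - (\sum_j u i (b j)) / (n * T)%:R| <=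
    Mu * (((delta ^+ T) ^+ n)^-1 - (delta ^+ T) ^+ n).
Proof.
move=> hd T0; have m0 : (0 < n * T)%N by rewrite muln_gt0 n_gt0.
rewrite (Upay_wavg _ _ _ (Ordinal m0)) -exprM [(T * n)%N]mulnC.
have := wavg_mean (c := fun k => u i (b (cycidx (Ordinal m0) (i * T + k)))) hd m0.
by rewrite (sum_cycidx _ _ (fun j => u i (b j))); apply=> k _; apply: normu_le.
Qed.

Lemma Upay_const (delta : R) T (a : A) i : 0 < delta -> (0 < T)%N ->
  Upay u delta ([ffun _ => a] : {ffun 'I_(n * T) -> A}) i = u i a.
Proof.
move=> d0 T0; have m0 : (0 < n * T)%N by rewrite muln_gt0 n_gt0.
by rewrite (Upay_wavg _ _ _ (Ordinal m0)); apply: wavg_const => // k _; rewrite ffunE.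
Qed.

Lemma Upay_bounds (delta : R) T (b : {ffun 'I_(n * T) -> A}) i (lo hi : R) :
  0 < delta -> (0 < T)%N -> (forall a, lo <= u i a <= hi) ->
  lo <= Upay u delta b i <= hi.
Proof.
move=> d0 T0 h; have m0 : (0 < n * T)%N by rewrite muln_gt0 n_gt0.
by rewrite (Upay_wavg _ _ _ (Ordinal m0)); apply: wavg_bounds.
Qed.

(* Player [i] enters at stage [i * T], so during its first [T] stages it
   faces [p i]. *)
Definition block_profile T (p : 'I_n -> A) : {ffun 'I_(n * T) -> A} :=
  [ffun j : 'I_(n * T) => p (cycidx (Ordinal n_gt0) (j %/ T))].

Lemma Upay_block_profile (delta : R) T (p : 'I_n -> A) i :
  0 < delta <= 1 -> (0 < T)%N ->
  `|Upay u delta (block_profile T p) i - u i (p i)| <= 2 * Mu * n%:R * delta ^+ T.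
Proof.
move=> hd T0; have m0 : (0 < n * T)%N by rewrite muln_gt0 n_gt0.
rewrite (Upay_wavg _ _ _ (Ordinal m0)).
apply: wavg_first_block => // [k kT|k _]; last exact: normu_sub_le.
have k_lt : (i * T + k < n * T)%N.
  apply: (@leq_trans (i.+1 * T)); first by rewrite mulSnr ltn_add2l.
  by rewrite leq_mul2r ltn_ord orbT.
rewrite ffunE; congr (u i (p _)); apply: val_inj.
by rewrite /= (modn_small k_lt) divnMDl // divn_small // addn0 modn_small.
Qed.

Lemma Fset_near1 (eps : R) : 0 < eps -> exists2 eta, 0 < eta &
  forall delta T, 0 < delta <= 1 -> (0 < T)%N -> 1 - delta ^+ T < eta ->
    hclose (Fset u delta T) (Vset u) eps.
Proof.
move=> eps0; have [eta eta0 near] := near1_inv_expr_sub n Mu_ge0 eps0.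
exists eta => // delta T hd T0 hx; have m0 : (0 < n * T)%N by rewrite muln_gt0 n_gt0.
have mR : (n * T)%:R != 0 :> R by rewrite pnatr_eq0 -lt0n.
split=> [x Fx|y [w [w0 w1 hy]]].
  apply: hull_approx Fx _ => b.
  exists (fun i => (\sum_j u i (b j)) / (n * T)%:R); split.
    apply: (@hull_push _ _ _ _ _ b (fun _ => (n * T)%:R^-1)) => [j||i].
    - by rewrite invr_ge0 ler0n.
    - by rewrite sumr_const card_ord -[LHS]mulr_natr mulVf.
    - by rewrite mulr_suml; apply: eq_bigr => j _; rewrite mulrC.
  by move=> i; apply: le_trans (Upay_mean b i hd T0) (near _ (expr_in_unit T hd) hx).
exists y; split; last by move=> i; rewrite subrr normr0 ltW.
apply: (@hull_push _ _ _ _ _ (fun a => [ffun _ => a]) w) => // i.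
by rewrite hy; apply: eq_bigr => a _; rewrite Upay_const //; case/andP: hd.
Qed.

Lemma Fset_sub_box (delta : R) T x : 0 < delta -> (0 < T)%N ->
  Fset u delta T x -> box u x.
Proof.
move=> d0 T0 [w [w0 w1 hx]] i.
have [b0 _] : exists b0 : {ffun 'I_(n * T) -> A}, true.
  case: (pickP (fun _ : {ffun 'I_(n * T) -> A} => true)) => [b0 _|none]; first by exists b0.
  by move: w1; rewrite big_pred0 // => /esym/eqP; rewrite oner_eq0.
have m0 : (0 < n * T)%N by rewrite muln_gt0 n_gt0.
case: (@arg_minP _ _ _ (b0 (Ordinal m0)) xpredT (u i) isT) => amin _ hmin.
case: (@arg_maxP _ _ _ (b0 (Ordinal m0)) xpredT (u i) isT) => amax _ hmax.
have /andP[lo hi] : u i amin <= x i <= u i amax.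
  rewrite hx; apply: convex_comb_bounds => // b.
  by apply: Upay_bounds => // a; apply/andP; split; [exact: hmin | exact: hmax].
by split; [exists amin | exists amax].
Qed.

(* A point of the box is a product-weight mixture of vertices, and the
   vertex with coordinates [u i (p i)] is approximated by [block_profile T p]. *)
Lemma box_near_Fset (eps : R) : 0 < eps -> exists2 eta, 0 < eta &
  forall delta T, 0 < delta <= 1 -> (0 < T)%N -> delta ^+ T < eta ->
    forall y, box u y -> exists x, Fset u delta T x /\ forall i, `|x i - y i| <= eps.
Proof.
move=> eps0; have C0 : 0 <= 2 * Mu * n%:R by rewrite !mulr_ge0 ?Mu_ge0.
have [eta eta0 near] := linear_small C0 eps0.
exists eta => // delta T hd T0 hx y hy.
have [lo hlo] := fin_all_exists (fun i => (hy i).1).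
have [hi hhi] := fin_all_exists (fun i => (hy i).2).
have /fin_all_exists[t ht] : forall i, exists t : R,
    0 <= t <= 1 /\ y i = t * u i (hi i) + (1 - t) * u i (lo i).
  by move=> i; apply: segment_interpolate; rewrite hlo hhi.
pose vertex (s : {ffun 'I_n -> bool}) j := if s j then hi j else lo j.
have y_hull : hull (fun s i => u i (vertex s i)) y.
  exists (prodw t); split => [s||i]; first exact/prodw_ge0/(fun i => (ht i).1).
    exact: sum_prodw.
  rewrite (ht i).2 -sum_prodw_marginal; apply: eq_bigr => s _.
  by rewrite /vertex; case: (s i).
have [x [Fx hxy]] : exists x, Fset u delta T x /\ forall i, `|y i - x i| <= eps.
  apply: hull_approx y_hull _ => s.
  exists (Upay u delta (block_profile T (vertex s))); split; first exact: hull_point.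
  move=> i; rewrite distrC.
  exact: le_trans (Upay_block_profile _ _ hd T0) (near _ hx).
by exists x; split => // i; rewrite distrC.
Qed.

Lemma Fset_near0 (eps : R) : 0 < eps -> exists2 eta, 0 < eta &
  forall delta T, 0 < delta <= 1 -> (0 < T)%N -> delta ^+ T < eta ->
    hclose (Fset u delta T) (box u) eps.
Proof.
move=> eps0; have [eta eta0 near] := box_near_Fset eps0.
exists eta => // delta T hd T0 hx; split; last exact: near.
move=> x Fx; exists x; split; last by move=> i; rewrite subrr normr0 ltW.
by apply: Fset_sub_box Fx; case/andP: hd.
Qed.

End Game.

Unset Implicit Arguments.

Theorem corollary1 (R : realType) (n : nat) (Ai : 'I_n -> finType)
  (u : 'I_n -> {dffun forall i : 'I_n, Ai i} -> R) (lam : 'I_n -> R) :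
  (2 <= n)%N ->
  (forall i, 0 < #|Ai i|)%N ->
  (exists i, lam i != 0) ->
  [/\
  (* (1) maximizers for Delta = delta^T close to 1 *)
   (exists eta : R, 0 < eta /\
     forall (delta : R) (T : nat), 0 < delta <= 1 -> (0 < T)%N ->
       1 - eta < delta ^+ T ->
       forall a : {ffun 'I_n -> {dffun forall i : 'I_n, Ai i}},
         is_maximizer u lam (delta ^+ T) a ->
         forall (k : 'I_n) (a' : {dffun forall i : 'I_n, Ai i}),
           dotu u lam a' <= dotu u lam (a k)),
  (* (1) F(delta,T) -> V as delta^T increases to 1 *)
   (forall eps : R, 0 < eps -> exists eta : R, 0 < eta /\
     forall (delta : R) (T : nat), 0 < delta <= 1 -> (0 < T)%N ->
       1 - eta < delta ^+ T -> hclose (Fset u delta T) (Vset u) eps),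
  (* (2) maximizers for Delta = delta^T close to 0 *)
   (exists eta : R, 0 < eta /\
     forall (delta : R) (T : nat), 0 < delta <= 1 -> (0 < T)%N ->
       delta ^+ T < eta ->
       forall a : {ffun 'I_n -> {dffun forall i : 'I_n, Ai i}},
         is_maximizer u lam (delta ^+ T) a ->
         forall (k : 'I_n) (a' : {dffun forall i : 'I_n, Ai i}),
           lam k * u k a' <= lam k * u k (a k)) &
  (* (2) F(delta,T) -> box as delta^T decreases to 0 *)
   (forall eps : R, 0 < eps -> exists eta : R, 0 < eta /\
     forall (delta : R) (T : nat), 0 < delta <= 1 -> (0 < T)%N ->
       delta ^+ T < eta -> hclose (Fset u delta T) (box u) eps)].
Proof.
move=> n2 _ _; have n_gt0 : (0 < n)%N := ltnW n2.
split.
- have [eta eta0 near] := maximizer_near1 u lam n_gt0.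
  exists eta; split => // delta T hd _ hx; apply: near; [exact: expr_in_unit | lra].
- move=> eps eps0; have [eta eta0 near] := Fset_near1 u n_gt0 eps0.
  by exists eta; split => // delta T hd T0 hx; apply: near => //; lra.
- have [eta eta0 near] := maximizer_near0 u lam n_gt0.
  by exists eta; split => // delta T hd _ hx; apply: near; first exact: expr_in_unit.
- move=> eps eps0; have [eta eta0 near] := Fset_near0 u n_gt0 eps0.
  by exists eta; split => // delta T hd T0 hx; apply: near.
Qed.
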